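(* Let $d\ge2$, $p\ge1$ and $k\in\mathbb{N}$ with $k\ge d^{6p}$. Define $\phi:\mathcal{C}_k^{(d)}\to\mathbb{R}$ by $$\phi(T):=1-\prod_{m=1}^\infty\frac{N_{\le m(p-1)}(T)}{dk+1}.$$ Then for every $T\in\mathcal{C}_k^{(d)}$, $|1-\phi(T)|\le\exp(-c_{d,p}\log^2k)$, where $c_{d,p}:=(4p\log d)^{-1}$.
   Context: A $d$-Catalan tree is a rooted planar tree in which each vertex has $0$ or $d$ children; $\mathcal{C}_k^{(d)}$ is the set of those with $k$ internal vertices (so $dk+1$ vertices in total). $N_j(T)$ is the number of vertices at distance $j$ from the root and $N_{\le q}(T)=\sum_{0\le j\le q}N_j(T)$. *)

From HB Require Import structures.
From mathcomp Require Import all_boot all_order all_algebra.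
From mathcomp Require Import all_classical all_reals all_analysis.
Set Implicit Arguments. Unset Strict Implicit. Unset Printing Implicit Defensive.
Import Order.TTheory GRing.Theory Num.Theory.
Import numFieldNormedType.Exports.

(* Rooted planar (ordered) trees: a vertex with its ordered list of children.
   A leaf is [Node [::]]. *)
Inductive tree := Node of seq tree.

Fixpoint is_dcatalan (d : nat) (t : tree) : bool :=
  let: Node ts := t in
  ((size ts == 0) || (size ts == d)) && all (is_dcatalan d) ts.

Fixpoint internal (t : tree) : nat :=
  let: Node ts := t in (size ts != 0) + sumn (map internal ts).

Definition in_Ck (d k : nat) (t : tree) : bool := is_dcatalan d t && (internal t == k).

Fixpoint Nlev (t : tree) (j : nat) : nat :=
  let: Node ts := t in
  if j is j'.+1 then sumn (map (fun s => Nlev s j') ts) else 1.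

Definition Nle (t : tree) (q : nat) : nat := \sum_(0 <= j < q.+1) Nlev t j.

Local Open Scope ring_scope.

Definition infprod1 (R : realType) (u : nat -> R) : R :=
  limn (fun M : nat => \prod_(1 <= m < M.+1) u m).

Definition phi (R : realType) (d p k : nat) (t : tree) : R :=
  1 - infprod1 (fun m => (Nle t (m * (p - 1)))%:R / (d * k + 1)%:R).

Definition cdp (R : realType) (d p : nat) : R := (4 * p%:R * ln (d%:R : R))^-1.

(* 1 - phi(T) is the limit of the nonincreasing partial products of factors in
   [0, 1], hence at most the partial product up to M = floor(log_{d^p} k).
   Since N_{<=q}(T) < d^(q+1) and T has dk+1 vertices, the m-th factor is at
   most d^(m(p-1)) / k, so that partial product is at most
   exp((p-1) log d M(M+1)/2 - M log k).  With M p log d <= log k <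
   (M+1) p log d and M >= 2 this exponent is at most -(log k)^2/(4 p log d). *)

From HB Require Import structures.
From mathcomp Require Import all_boot all_order all_algebra.
From mathcomp Require Import all_classical all_reals all_analysis.
From Stdlib Require List.
Import Order.TTheory GRing.Theory Num.Theory.
Import numFieldNormedType.Exports.
From mathcomp Require Import zify ring lra.

Set Implicit Arguments.
Unset Strict Implicit.
Unset Printing Implicit Defensive.

(* Rocq's generated [tree_ind] gives no induction hypothesis for the children. *)
Lemma tree_ind_in (P : tree -> Prop) :
  (forall ts, (forall s, List.In s ts -> P s) -> P (Node ts)) -> forall t, P t.
Proof.
move=> IH; fix F 1 => -[ts]; apply: IH.
(* no [//] here: [done] would close the goals with the unguarded [F] *)
elim: ts => [|s ts IHts] s' /= => [[]|[e|/IHts]]; last exact.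
case: s' / e; exact: F.
Qed.

Fixpoint tree_size (t : tree) : nat := let: Node ts := t in (sumn (map tree_size ts)).+1.

Lemma sumn_mapE (T : Type) (f : T -> nat) s : sumn (map f s) = \sum_(x <- s) f x.
Proof. by rewrite sumnE big_map. Qed.

Lemma leq_sum_In (T : Type) (f g : T -> nat) s :
  (forall x, List.In x s -> f x <= g x) -> \sum_(x <- s) f x <= \sum_(x <- s) g x.
Proof.
elim: s => [|x s IHs] fg; first by rewrite !big_nil.
by rewrite !big_cons leq_add ?IHs // => [|y sy]; apply: fg; [left|right].
Qed.

Lemma eq_sum_In (T : Type) (f g : T -> nat) s :
  (forall x, List.In x s -> f x = g x) -> \sum_(x <- s) f x = \sum_(x <- s) g x.
Proof.
by move=> fg; apply/eqP; rewrite eqn_leq !leq_sum_In // => x /fg ->.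
Qed.

Lemma In_all (T : Type) (a : pred T) s x : all a s -> List.In x s -> a x.
Proof.
by elim: s => [|y s IHs] //= /andP[ay all_s] [<-|/(IHs all_s)].
Qed.

Lemma dcatalan_child d ts s :
  is_dcatalan d (Node ts) -> List.In s ts -> is_dcatalan d s.
Proof. by case/andP=> _; apply: In_all. Qed.

Lemma dcatalan_size_children d ts : is_dcatalan d (Node ts) -> size ts <= d.
Proof. by case/andP=> /orP[] /eqP ->. Qed.

Lemma Nlev_dcatalan_leq d t j : is_dcatalan d t -> Nlev t j <= d ^ j.
Proof.
elim/tree_ind_in: t j => ts IH [|j] dcat //=.
rewrite sumn_mapE expnS.
apply: (@leq_trans (\sum_(s <- ts) d ^ j)).
  by apply: leq_sum_In => s s_ts; apply: IH => //; apply: dcatalan_child s_ts.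
rewrite big_const_seq count_predT iter_addn_0 mulnC.
by rewrite leq_mul2r dcatalan_size_children ?orbT.
Qed.

Lemma tree_size_dcatalan d t : is_dcatalan d t -> tree_size t = d * internal t + 1.
Proof.
elim/tree_ind_in: t => ts IH dcat /=.
rewrite !sumn_mapE (@eq_sum_In _ _ (fun s => d * internal s + 1)); last first.
  by move=> s s_ts; apply: IH => //; apply: dcatalan_child s_ts.
rewrite big_split -big_distrr /= sum1_size.
case/andP: dcat => /orP[] /eqP size_ts _.
  by case: ts {IH} size_ts => // _; rewrite !big_nil muln0.
by rewrite size_ts; case: d {IH size_ts} => [|d] /=; lia.
Qed.

Lemma sum_Nlev_leq_size t q : \sum_(0 <= j < q) Nlev t j <= tree_size t.
Proof.
elim/tree_ind_in: t q => ts IH [|q]; first by rewrite big_geq.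
rewrite big_nat_recl //= add1n ltnS.
under eq_bigr do rewrite sumn_mapE.
rewrite exchange_big sumn_mapE.
by apply: leq_sum_In => s s_ts; apply: IH.
Qed.

Lemma Nle_dcatalan_lt d t q : 1 < d -> is_dcatalan d t -> Nle t q < d ^ q.+1.
Proof.
move=> d_gt1 dcat; rewrite /Nle big_mkord.
apply: (@leq_ltn_trans (\sum_(j < q.+1) d ^ j)).
  by apply: leq_sum => j _; apply: Nlev_dcatalan_leq.
have dq_gt0 : 0 < d ^ q.+1 by rewrite expn_gt0 ltnW.
by rewrite -(prednK dq_gt0) ltnS predn_exp leq_pmull // -subn1 subn_gt0.
Qed.

Local Open Scope ring_scope.

Lemma infprod1_bounds (R : realType) (u : nat -> R) :
  (forall m, 0 <= u m <= 1) -> forall M, 0 <= infprod1 u <= \prod_(1 <= m < M.+1) u m.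
Proof.
move=> u01 M; set P := fun M => \prod_(1 <= m < M.+1) u m.
have P_ge0 n : 0 <= P n by apply: prodr_ge0 => m _; case/andP: (u01 m).
have P_noninc : {homo P : i j / (i <= j)%N >-> j <= i}.
  apply/nonincreasing_seqP => n.
  rewrite /P big_nat_recr //= ler_piMr //; first exact: P_ge0.
  by case/andP: (u01 n.+1).
have P_cvg : cvgn P by apply: nonincreasing_is_cvgn => //; exists 0 => _ [n _ <-].
apply/andP; split; first by apply: limr_ge => //; apply: nearW.
exact: nonincreasing_cvgn_ge.
Qed.

Lemma sum_affine (R : realFieldType) (a b : R) M :
  \sum_(1 <= m < M.+1) (m%:R * a - b) = a * (M%:R * (M%:R + 1)) / 2 - M%:R * b.
Proof.
elim: M => [|M IH]; first by rewrite big_geq //; field.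
by rewrite big_nat_recr //= IH -natr1; field.
Qed.

Lemma quadratic_exponent_le (R : realFieldType) (P L x K : R) :
  1 <= P -> 0 < L -> 2 <= x -> x * (P * L) <= K <= (x + 1) * (P * L) ->
  (P - 1) * L * (x * (x + 1)) / 2 - x * K <= - (4 * P * L)^-1 * K ^+ 2.
Proof.
move=> P_ge1 L_gt0 x_ge2 /andP[K_ge K_le].
set a := P * L in K_ge K_le *.
have a_gt0 : 0 < a by apply: mulr_gt0 => //; lra.
have dev_ge0 : 0 <= 2 * a * x - K by nra.
have dev_le : 2 * a * x - K <= a * x by lra.
have dev_sq : (2 * a * x - K) ^+ 2 <= (a * x) ^+ 2.
  by rewrite ler_sqr ?nnegrE //; nra.
have PL_le : (P - 1) * L <= a by rewrite /a; nra.
(* 0 <= 2ax - K <= ax bounds the square; the rest is at most a^2 x (2 - x). *)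
have key : 4 * a * ((P - 1) * L * (x * (x + 1)) / 2 - x * K) + K ^+ 2 <= 0.
  have cross : 2 * a * ((P - 1) * L) * (x * (x + 1)) <= 2 * a * a * (x * (x + 1)).
    by apply: ler_wpM2r; [nra | rewrite ler_pM2l //; lra].
  have : a * a * x * (2 - x) <= 0 by apply: mulr_ge0_le0; [nra | lra].
  nra.
rewrite -subr_ge0.
have -> : - (4 * P * L)^-1 * K ^+ 2 - ((P - 1) * L * (x * (x + 1)) / 2 - x * K) =
   - (4 * a * ((P - 1) * L * (x * (x + 1)) / 2 - x * K) + K ^+ 2) / (4 * a).
  by rewrite /a; field; lra.
by apply: divr_ge0; lra.
Qed.

Lemma ln_trunc_log_bounds (R : realType) b n : (1 < b)%N -> (0 < n)%N ->
  (trunc_log b n)%:R * ln (b%:R : R) <= ln (n%:R : R)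
  <= (trunc_log b n).+1%:R * ln (b%:R : R).
Proof.
move=> b_gt1 n_gt0; have /andP[lo hi] := trunc_log_bounds b_gt1 n_gt0.
have b_gt0 : 0 < b%:R :> R by rewrite ltr0n ltnW.
have bX_gt0 m : 0 < (b ^ m)%:R :> R by rewrite ltr0n expn_gt0 ltnW.
rewrite !mulr_natl -!lnXn // -!natrX !ler_ln ?posrE ?bX_gt0 ?ltr0n //.
by rewrite !ler_nat lo ltnW.
Qed.

Lemma Nle_ratio_le_expR (R : realType) d k t q :
  (1 < d)%N -> (0 < k)%N -> is_dcatalan d t ->
  (Nle t q)%:R / (d * k + 1)%:R <= expR (q%:R * ln (d%:R : R) - ln (k%:R : R)).
Proof.
move=> d_gt1 k_gt0 dcat; have d_gt0 := ltnW d_gt1.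
rewrite expRD expRN [q%:R * _]mulr_natl -lnXn ?ltr0n //.
rewrite !lnK ?posrE ?exprn_gt0 ?ltr0n // ler_pdivrMr ?ltr0n ?addn1 //.
rewrite mulrAC ler_pdivlMr ?ltr0n // -!natrX -!natrM ler_nat.
by have := Nle_dcatalan_lt q d_gt1 dcat; rewrite expnS; nia.
Qed.

Theorem lemma6p4 (R : realType) (d p k : nat) (T : tree) :
  (2 <= d)%N -> (1 <= p)%N -> (d ^ (6 * p) <= k)%N -> in_Ck d k T ->
  `|1 - phi R d p k T| <= expR (- cdp R d p * (ln (k%:R : R)) ^+ 2).
Proof.
move=> d_ge2 p_ge1 k_ge /andP[dcatT /eqP internalT].
have k_gt0 : (0 < k)%N by apply: leq_trans k_ge; rewrite expn_gt0 ltnW.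
have dp_gt1 : (1 < d ^ p)%N by rewrite -(expn0 d) ltn_exp2l.
set M := trunc_log (d ^ p) k; set L := ln (d%:R : R); set K := ln (k%:R : R).
have M_ge2 : (2 <= M)%N.
  apply: trunc_log_max => //; apply: leq_trans k_ge.
  by rewrite -expnM leq_exp2l //; lia.
have K_bounds : M%:R * (p%:R * L) <= K <= (M%:R + 1) * (p%:R * L).
  have := ln_trunc_log_bounds R dp_gt1 k_gt0.
  by rewrite natrX lnXn ?ltr0n ?(ltnW d_ge2) // -[L *+ p]mulr_natl natr1.
set u := fun m => (Nle T (m * (p - 1)))%:R / (d * k + 1)%:R : R.
have u01 m : 0 <= u m <= 1.
  rewrite divr_ge0 //= ler_pdivrMr ?ltr0n ?addn1 // mul1r ler_nat.
  apply: leq_trans (sum_Nlev_leq_size T _) _.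
  by rewrite (tree_size_dcatalan dcatT) internalT addn1.
have /andP[prod_ge0 prod_le] := infprod1_bounds u01 M.
rewrite /phi subKr ger0_norm //; apply: (le_trans prod_le).
apply: (@le_trans _ _ (\prod_(1 <= m < M.+1) expR ((m * (p - 1))%:R * L - K))).
  by apply: ler_prod => m _; rewrite (andP (u01 m)).1 Nle_ratio_le_expR.
rewrite -expR_sum ler_expR.
under eq_bigr do rewrite natrM -mulrA.
rewrite sum_affine natrB // /cdp.
apply: quadratic_exponent_le => //; first by rewrite ler1n.
  by apply: ln_gt0; rewrite ltr1n.
by rewrite (ler_nat R 2 M).
Qed.
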